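(* Consider the lower-bound type system, and assume the program is well-typed w.r.t. the signature $\Sigma$ in that system. Let $\models E:\Gamma$, $E\vdash e\Downarrow v$, and suppose $\Sigma;\Gamma\vdash^{q}_{q'}e:A$ is derivable in the lower-bound type system. Then for all $p,p'\in\mathbb Q_{\ge0}$ with $E\vdash^{p}_{p'}e\Downarrow v$ we have $$q+\Phi_E(\Gamma)-\bigl(q'+\Phi(v:A)\bigr)\le p-p'.$$
   Context: Base types: $T ::= \mathsf{unit}\mid\mathsf{bool}\mid\mathsf{int}\mid L(T)\mid T*T$. Values: $v ::= () \mid \mathsf{true}\mid\mathsf{false}\mid n\ (n\in\mathbb Z)\mid [v_1,\dots,v_n]\ (n\ge 0$, the empty list being $\mathsf{nil})\mid (v_1,v_2)$. Value typing $\models v:T$: $()$ has type $\mathsf{unit}$, booleans have type $\mathsf{bool}$, integers have type $\mathsf{int}$, $(v_1,v_2):T_1*T_2$ if $\models v_i:T_i$, and $[v_1,\dots,v_n]:L(T)$ if every $\models v_i:T$ (so $\mathsf{nil}$ has every list type). Expressions (let-normal form; $x,x_i$ are variables, $f$ function identifiers): $e ::= () \mid \mathsf{true}\mid \mathsf{false}\mid n\mid x\mid \mathrm{op}_\diamond(x_1,x_2)\mid \mathrm{app}(f,x)\mid \mathrm{if}(x,e_t,e_f)\mid \mathrm{let}(x,e_1,x.e_2)\mid \mathrm{pair}(x_1,x_2)\mid \mathrm{match}(x,(x_1,x_2).e)\mid \mathsf{nil}\mid \mathrm{cons}(x_1,x_2)\mid\mathrm{match}(x,e_1,(x_h,x_t).e_2)\mid\mathrm{share}(x,(x_1,x_2).e)$,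 with $\diamond\in\{+,-,*,\mathrm{div},\mathrm{mod},=,<>,<,>,\mathrm{and},\mathrm{or}\}$. A program fixes for each function identifier $f$ a body $e_f$ with a single parameter variable $y^f$. An environment $E$ is a finite map from variables to values. Cost semantics: fix arbitrary rational constants $K^{\mathrm{unit}},K^{\mathrm{bool}},K^{\mathrm{int}},K^{\mathrm{nil}},K^{\mathrm{var}},K^{\mathrm{op}},K^{\mathrm{app}},K^{\mathrm{let}},K^{\mathrm{cond}},K^{\mathrm{pair}},K^{\mathrm{matchP}},K^{\mathrm{cons}},K^{\mathrm{matchN}},K^{\mathrm{matchL}}$. The judgement $E\vdash^{q}_{q'} e\Downarrow v$ (all counters $q,q'$ occurring in derivations are in $\mathbb Q_{\ge0}$) is defined inductively: $E\vdash^{q+K^{c}}_{q}c\Downarrow c$ for constants $c\in\{(),\mathsf{true},\mathsf{false},n,\mathsf{nil}\}$ with the corresponding constant $K^{\mathrm{unit}},K^{\mathrm{bool}},K^{\mathrm{int}},K^{\mathrm{nil}}$; $E\vdash^{q+K^{\mathrm{var}}}_q x\Downarrow E(x)$ for $x\in\mathrm{dom}(E)$; $E\vdash^{q+K^{\mathrm{op}}}_q\mathrm{op}_\diamond(x_1,x_2)\Downarrow E(x_1)\diamond E(x_2)$; $E\vdash^{q+K^{\mathrm{pair}}}_q \mathrm{pair}(x_1,x_2)\Downarrow (E(x_1),E(x_2))$; $E\vdash^{q+K^{\mathrm{cons}}}_q\mathrm{cons}(x_h,x_t)\Downarrow[v_1,\dots,v_n]$ if $E(x_h)=v_1$ and $E(x_t)=[v_2,\dots,v_n]$;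 if $E[y^f\mapsto E(x)]\vdash^q_{q'}e_f\Downarrow v$ then $E\vdash^{q+K^{\mathrm{app}}}_{q'}\mathrm{app}(f,x)\Downarrow v$; if $E\vdash^{q-K^{\mathrm{let}}}_{q_1}e_1\Downarrow v_1$ and $E[x\mapsto v_1]\vdash^{q_1}_{q'}e_2\Downarrow v$ then $E\vdash^q_{q'}\mathrm{let}(x,e_1,x.e_2)\Downarrow v$; if $E(x)=\mathsf{true}$ and $E\vdash^{q-K^{\mathrm{cond}}}_{q'}e_t\Downarrow v$ (resp. $E(x)=\mathsf{false}$ and $E\vdash^{q-K^{\mathrm{cond}}}_{q'}e_f\Downarrow v$) then $E\vdash^q_{q'}\mathrm{if}(x,e_t,e_f)\Downarrow v$; if $E(x)=(v_1,v_2)$ and $E[x_1\mapsto v_1,x_2\mapsto v_2]\vdash^{q-K^{\mathrm{matchP}}}_{q'}e\Downarrow v$ then $E\vdash^q_{q'}\mathrm{match}(x,(x_1,x_2).e)\Downarrow v$; if $E(x)=\mathsf{nil}$ and $E\vdash^{q-K^{\mathrm{matchN}}}_{q'}e_1\Downarrow v$ then $E\vdash^q_{q'}\mathrm{match}(x,e_1,(x_h,x_t).e_2)\Downarrow v$; if $E(x)=[v_1,\dots,v_n]$ with $n\ge1$ and $E[x_h\mapsto v_1,x_t\mapsto[v_2,\dots,v_n]]\vdash^{q-K^{\mathrm{matchL}}}_{q'}e_2\Downarrow v$ then $E\vdash^q_{q'}\mathrm{match}(x,e_1,(x_h,x_t).e_2)\Downarrow v$; if $E(x)=v_1$ and $(E\setminus\{x\})[x_1\mapsto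 v_1,x_2\mapsto v_1]\vdash^q_{q'}e\Downarrow v$ then $E\vdash^q_{q'}\mathrm{share}(x,(x_1,x_2).e)\Downarrow v$. We write $E\vdash e\Downarrow v$ if $E\vdash^q_{q'}e\Downarrow v$ for some $q,q'$. Resource-annotated types: $A ::= \mathsf{unit}\mid\mathsf{bool}\mid\mathsf{int}\mid L^p(A)\mid A*A$ with $p\in\mathbb Q_{\ge0}$; $|A|$ denotes the base type obtained by erasing annotations. An annotated context $\Gamma$ is a finite map from variables to annotated types; $\Gamma_1,\Gamma_2$ denotes the union of contexts with disjoint domains (contexts are unordered). $\models E:\Gamma$ means $\models E(x):|\Gamma(x)|$ for all $x\in\mathrm{dom}(\Gamma)$. Potential: $\Phi(v:A)=0$ for $A\in\{\mathsf{unit},\mathsf{bool},\mathsf{int}\}$; $\Phi((v_1,v_2):A_1*A_2)=\Phi(v_1:A_1)+\Phi(v_2:A_2)$; $\Phi([v_1,\dots,v_n]:L^p(A))=n\cdot p+\sum_{i=1}^n\Phi(v_i:A)$; $\Phi_E(\Gamma)=\sum_{x\in\mathrm{dom}(\Gamma)}\Phi(E(x):\Gamma(x))$. Sharing relation: $\curlyvee(A\mid A,A)$ for $A\in\{\mathsf{unit},\mathsf{bool},\mathsf{int}\}$; $\curlyvee(A*B\mid A_1*B_1,A_2*B_2)$ if $\curlyvee(A\mid A_1,A_2)$ and $\curlyvee(B\mid B_1,B_2)$; $\curlyvee(L^p(A)\mid L^{p_1}(A_1),L^{p_2}(A_2))$ if $\curlyvee(A\mid A_1,A_2)$ and $p=p_1+p_2$.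 Subtyping $\preceq$: $A\preceq A$ for atoms; $L^{p_1}(A_1)\preceq L^{p_2}(A_2)$ if $A_1\preceq A_2$ and $p_1\le p_2$; $A_1*B_1\preceq A_2*B_2$ if $A_1\preceq A_2$ and $B_1\preceq B_2$. A signature $\Sigma$ maps function identifiers to nonempty sets of annotated function types $A_1\xrightarrow{q/q'}A_2$ ($q,q'\in\mathbb Q_{\ge0}$). Typing judgements $\Sigma;\Gamma\vdash^{q}_{q'}e:A$ with $q,q'\in\mathbb Q_{\ge0}$ (every annotation in a rule instance must be a nonnegative rational). Syntax-directed rules: $\Sigma;\emptyset\vdash^{K^{\mathrm{unit}}}_0():\mathsf{unit}$; $\Sigma;\emptyset\vdash^{K^{\mathrm{bool}}}_0 b:\mathsf{bool}$; $\Sigma;\emptyset\vdash^{K^{\mathrm{int}}}_0 n:\mathsf{int}$; $\Sigma;\emptyset\vdash^{K^{\mathrm{nil}}}_0\mathsf{nil}:L^p(A)$; $\Sigma;x:A\vdash^{K^{\mathrm{var}}}_0x:A$; $\Sigma;x_1:\mathsf{bool},x_2:\mathsf{bool}\vdash^{K^{\mathrm{op}}}_0\mathrm{op}_\diamond(x_1,x_2):\mathsf{bool}$ for $\diamond\in\{\mathrm{and},\mathrm{or}\}$; $\Sigma;x_1:\mathsf{int},x_2:\mathsf{int}\vdash^{K^{\mathrm{op}}}_0\mathrm{op}_\diamond(x_1,x_2):\mathsf{bool}$ for comparisons and $:\mathsf{int}$ for $+,-,*,\mathrm{div},\mathrm{mod}$; if $A_1\xrightarrow{q/q'}A_2\in\Sigma(f)$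 then $\Sigma;x:A_1\vdash^{q+K^{\mathrm{app}}}_{q'}\mathrm{app}(f,x):A_2$; from $\Sigma;\Gamma_1\vdash^{q-K^{\mathrm{let}}}_{q_1}e_1:A_1$ and $\Sigma;\Gamma_2,x:A_1\vdash^{q_1}_{q'}e_2:A_2$ infer $\Sigma;\Gamma_1,\Gamma_2\vdash^q_{q'}\mathrm{let}(x,e_1,x.e_2):A_2$; from $\Sigma;\Gamma\vdash^{q-K^{\mathrm{cond}}}_{q'}e_t:A$ and $\Sigma;\Gamma\vdash^{q-K^{\mathrm{cond}}}_{q'}e_f:A$ infer $\Sigma;\Gamma,x:\mathsf{bool}\vdash^q_{q'}\mathrm{if}(x,e_t,e_f):A$; $\Sigma;x_1:A_1,x_2:A_2\vdash^{K^{\mathrm{pair}}}_0\mathrm{pair}(x_1,x_2):A_1*A_2$; from $\Sigma;\Gamma,x_1:A_1,x_2:A_2\vdash^{q-K^{\mathrm{matchP}}}_{q'}e:A$ infer $\Sigma;\Gamma,x:A_1*A_2\vdash^q_{q'}\mathrm{match}(x,(x_1,x_2).e):A$; $\Sigma;x_h:A,x_t:L^p(A)\vdash^{p+K^{\mathrm{cons}}}_0\mathrm{cons}(x_h,x_t):L^p(A)$; from $\Sigma;\Gamma\vdash^{q-K^{\mathrm{matchN}}}_{q'}e_1:B$ and $\Sigma;\Gamma,x_h:A,x_t:L^p(A)\vdash^{q+p-K^{\mathrm{matchL}}}_{q'}e_2:B$ infer $\Sigma;\Gamma,x:L^p(A)\vdash^q_{q'}\mathrm{match}(x,e_1,(x_h,x_t).e_2):B$;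 from $\Sigma;\Gamma,x_1:A_1,x_2:A_2\vdash^q_{q'}e:B$ and $\curlyvee(A\mid A_1,A_2)$ infer $\Sigma;\Gamma,x:A\vdash^q_{q'}\mathrm{share}(x,(x_1,x_2).e):B$. Structural rules of the lower-bound system: (Relax) from $\Sigma;\Gamma\vdash^p_{p'}e:A$, $q\ge p$ and $q-p\le q'-p'$ infer $\Sigma;\Gamma\vdash^q_{q'}e:A$; (Weakening) from $\Sigma;\Gamma\vdash^q_{q'}e:B$ and $\curlyvee(A\mid A,A)$ infer $\Sigma;\Gamma,x:A\vdash^q_{q'}e:B$; (Subtype) from $\Sigma;\Gamma\vdash^q_{q'}e:A$ and $A\preceq B$ infer $\Sigma;\Gamma\vdash^q_{q'}e:B$; (Supertype) from $\Sigma;\Gamma,x:B\vdash^q_{q'}e:C$ and $A\preceq B$ infer $\Sigma;\Gamma,x:A\vdash^q_{q'}e:C$. The program is well-typed w.r.t. $\Sigma$ in this system if for every $f$ and every $A_1\xrightarrow{q/q'}A_2\in\Sigma(f)$, $\Sigma;y^f:A_1\vdash^q_{q'}e_f:A_2$ is derivable. *)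

From Stdlib Require Import QArith ZArith List Permutation.
Open Scope Q_scope.

Definition var := nat.
Definition fid := nat.

Inductive btype : Type :=
| BUnit | BBool | BInt | BList (T : btype) | BProd (T1 T2 : btype).

Inductive value : Type :=
| VUnit
| VBool (b : bool)
| VInt (n : Z)
| VList (vs : list value)
| VPair (v1 v2 : value).

Fixpoint has_btype (v : value) (T : btype) : Prop :=
  match v, T with
  | VUnit, BUnit => True
  | VBool _, BBool => True
  | VInt _, BInt => True
  | VPair v1 v2, BProd T1 T2 => has_btype v1 T1 /\ has_btype v2 T2
  | VList vs, BList T' =>
      (fix all_t (l : list value) : Prop :=
         match l with nil => True | w :: l' => has_btype w T' /\ all_t l' end) vs
  | _, _ => False
  end.

Inductive binop : Type :=
| OAdd | OSub | OMul | ODiv | OMod | OEq | ONeq | OLt | OGt | OAnd | OOr.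

Inductive expr : Type :=
| EUnit | ETrue | EFalse | EInt (n : Z) | EVar (x : var)
| EOp (o : binop) (x1 x2 : var)
| EApp (f : fid) (x : var)
| EIf (x : var) (et ef : expr)
| ELet (x : var) (e1 e2 : expr)
| EPair (x1 x2 : var)
| EMatchP (x x1 x2 : var) (e : expr)
| ENil
| ECons (xh xt : var)
| EMatchL (x : var) (e1 : expr) (xh xt : var) (e2 : expr)
| EShare (x x1 x2 : var) (e : expr).

(* A program: for each f, its parameter variable y^f and body e_f. *)
Definition program := fid -> (var * expr).

Definition eval_op (o : binop) (v1 v2 : value) : option value :=
  match o, v1, v2 with
  | OAdd, VInt a, VInt b => Some (VInt (a + b)%Z)
  | OSub, VInt a, VInt b => Some (VInt (a - b)%Z)
  | OMul, VInt a, VInt b => Some (VInt (a * b)%Z)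
  | ODiv, VInt a, VInt b => Some (VInt (Z.div a b))
  | OMod, VInt a, VInt b => Some (VInt (Z.modulo a b))
  | OEq, VInt a, VInt b => Some (VBool (Z.eqb a b))
  | ONeq, VInt a, VInt b => Some (VBool (negb (Z.eqb a b)))
  | OLt, VInt a, VInt b => Some (VBool (Z.ltb a b))
  | OGt, VInt a, VInt b => Some (VBool (Z.ltb b a))
  | OAnd, VBool a, VBool b => Some (VBool (andb a b))
  | OOr, VBool a, VBool b => Some (VBool (orb a b))
  | _, _, _ => None
  end.

Definition env := var -> option value.
Definition upd (E : env) (x : var) (v : value) : env :=
  fun y => if Nat.eqb y x then Some v else E y.
Definition remove (E : env) (x : var) : env :=
  fun y => if Nat.eqb y x then None else E y.

Record costs : Type := {
  Kunit : Q; Kbool : Q; Kint : Q; Knil : Q; Kvar : Q; Kop : Q; Kapp : Q;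
  Klet : Q; Kcond : Q; Kpair : Q; KmatchP : Q; Kcons : Q; KmatchN : Q; KmatchL : Q }.

(* ---------- Cost semantics:  eval K P E e q q' v  means  E |-^q_{q'} e ⇓ v ---------- *)
Inductive eval (K : costs) (P : program) : env -> expr -> Q -> Q -> value -> Prop :=
| ev_unit E q q' : 0 <= q -> 0 <= q' -> q == q' + Kunit K ->
    eval K P E EUnit q q' VUnit
| ev_true E q q' : 0 <= q -> 0 <= q' -> q == q' + Kbool K ->
    eval K P E ETrue q q' (VBool true)
| ev_false E q q' : 0 <= q -> 0 <= q' -> q == q' + Kbool K ->
    eval K P E EFalse q q' (VBool false)
| ev_int E n q q' : 0 <= q -> 0 <= q' -> q == q' + Kint K ->
    eval K P E (EInt n) q q' (VInt n)
| ev_nil E q q' : 0 <= q -> 0 <= q' -> q == q' + Knil K ->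
    eval K P E ENil q q' (VList nil)
| ev_var E x v q q' : 0 <= q -> 0 <= q' -> q == q' + Kvar K ->
    E x = Some v -> eval K P E (EVar x) q q' v
| ev_op E o x1 x2 v1 v2 v q q' : 0 <= q -> 0 <= q' -> q == q' + Kop K ->
    E x1 = Some v1 -> E x2 = Some v2 -> eval_op o v1 v2 = Some v ->
    eval K P E (EOp o x1 x2) q q' v
| ev_pair E x1 x2 v1 v2 q q' : 0 <= q -> 0 <= q' -> q == q' + Kpair K ->
    E x1 = Some v1 -> E x2 = Some v2 ->
    eval K P E (EPair x1 x2) q q' (VPair v1 v2)
| ev_cons E xh xt v1 vs q q' : 0 <= q -> 0 <= q' -> q == q' + Kcons K ->
    E xh = Some v1 -> E xt = Some (VList vs) ->
    eval K P E (ECons xh xt) q q' (VList (v1 :: vs))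
| ev_app E f x vx v r q q' : 0 <= q -> 0 <= q' ->
    E x = Some vx ->
    eval K P (upd E (fst (P f)) vx) (snd (P f)) r q' v ->
    q == r + Kapp K ->
    eval K P E (EApp f x) q q' v
| ev_let E x e1 e2 v1 v q q1 q2 q' : 0 <= q -> 0 <= q' ->
    q1 == q - Klet K ->
    eval K P E e1 q1 q2 v1 ->
    eval K P (upd E x v1) e2 q2 q' v ->
    eval K P E (ELet x e1 e2) q q' v
| ev_if_true E x et ef v q r q' : 0 <= q -> 0 <= q' ->
    E x = Some (VBool true) -> r == q - Kcond K ->
    eval K P E et r q' v -> eval K P E (EIf x et ef) q q' v
| ev_if_false E x et ef v q r q' : 0 <= q -> 0 <= q' ->
    E x = Some (VBool false) -> r == q - Kcond K ->
    eval K P E ef r q' v -> eval K P E (EIf x et ef) q q' v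
| ev_matchP E x x1 x2 e v1 v2 v q r q' : 0 <= q -> 0 <= q' ->
    E x = Some (VPair v1 v2) -> r == q - KmatchP K ->
    eval K P (upd (upd E x1 v1) x2 v2) e r q' v ->
    eval K P E (EMatchP x x1 x2 e) q q' v
| ev_matchN E x e1 xh xt e2 v q r q' : 0 <= q -> 0 <= q' ->
    E x = Some (VList nil) -> r == q - KmatchN K ->
    eval K P E e1 r q' v ->
    eval K P E (EMatchL x e1 xh xt e2) q q' v
| ev_matchL E x e1 xh xt e2 w ws v q r q' : 0 <= q -> 0 <= q' ->
    E x = Some (VList (w :: ws)) -> r == q - KmatchL K ->
    eval K P (upd (upd E xh w) xt (VList ws)) e2 r q' v ->
    eval K P E (EMatchL x e1 xh xt e2) q q' v
| ev_share E x x1 x2 e v1 v q q' : 0 <= q -> 0 <= q' ->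
    E x = Some v1 ->
    eval K P (upd (upd (remove E x) x1 v1) x2 v1) e q q' v ->
    eval K P E (EShare x x1 x2 e) q q' v.

Definition evals (K : costs) (P : program) (E : env) (e : expr) (v : value) : Prop :=
  exists q q', eval K P E e q q' v.

Inductive atype : Type :=
| AUnit | ABool | AInt | AList (p : Q) (A : atype) | AProd (A1 A2 : atype).

Fixpoint erase (A : atype) : btype :=
  match A with
  | AUnit => BUnit | ABool => BBool | AInt => BInt
  | AList _ B => BList (erase B)
  | AProd A1 A2 => BProd (erase A1) (erase A2)
  end.

Fixpoint anonneg (A : atype) : Prop :=
  match A with
  | AList p B => 0 <= p /\ anonneg B
  | AProd A1 A2 => anonneg A1 /\ anonneg A2
  | _ => True
  end.

(* Annotated contexts: finite maps, represented as lists with distinct keys,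
   considered up to permutation. *)
Definition ctx := list (var * atype).
Definition ctx_eq (G D : ctx) : Prop := Permutation G D /\ NoDup (map fst G).

Definition env_models (E : env) (G : ctx) : Prop :=
  forall x A, In (x, A) G -> exists v, E x = Some v /\ has_btype v (erase A).

Fixpoint pot (v : value) (A : atype) : Q :=
  match v, A with
  | VPair v1 v2, AProd A1 A2 => pot v1 A1 + pot v2 A2
  | VList vs, AList p B =>
      (fix go (l : list value) : Q :=
         match l with nil => 0 | w :: l' => p + pot w B + go l' end) vs
  | _, _ => 0
  end.

Definition pot_ctx (E : env) (G : ctx) : Q :=
  fold_right (fun xa acc =>
     match E (fst xa) with Some v => pot v (snd xa) | None => 0 end + acc) 0 G.

Inductive share : atype -> atype -> atype -> Prop :=
| sh_unit : share AUnit AUnit AUnit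
| sh_bool : share ABool ABool ABool
| sh_int : share AInt AInt AInt
| sh_prod A B A1 B1 A2 B2 : share A A1 A2 -> share B B1 B2 ->
    share (AProd A B) (AProd A1 B1) (AProd A2 B2)
| sh_list p p1 p2 A A1 A2 : share A A1 A2 -> p == p1 + p2 ->
    share (AList p A) (AList p1 A1) (AList p2 A2).

Inductive subty : atype -> atype -> Prop :=
| st_unit : subty AUnit AUnit
| st_bool : subty ABool ABool
| st_int : subty AInt AInt
| st_list p1 p2 A1 A2 : subty A1 A2 -> p1 <= p2 -> subty (AList p1 A1) (AList p2 A2)
| st_prod A1 B1 A2 B2 : subty A1 A2 -> subty B1 B2 ->
    subty (AProd A1 B1) (AProd A2 B2).

(* A signature: for each f a set of annotated function types A1 -q/q'-> A2. *)
Definition signature := fid -> atype -> Q -> Q -> atype -> Prop.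

Definition sig_wf (S : signature) : Prop :=
  (forall f, exists A1 q q' A2, S f A1 q q' A2) /\
  (forall f A1 q q' A2, S f A1 q q' A2 ->
     0 <= q /\ 0 <= q' /\ anonneg A1 /\ anonneg A2).

Definition wfj (G : ctx) (q q' : Q) (A : atype) : Prop :=
  0 <= q /\ 0 <= q' /\ Forall (fun xa => anonneg (snd xa)) G /\ anonneg A.

Definition op_type (o : binop) : atype * atype :=
  match o with
  | OAnd | OOr => (ABool, ABool)
  | OEq | ONeq | OLt | OGt => (AInt, ABool)
  | OAdd | OSub | OMul | ODiv | OMod => (AInt, AInt)
  end.

(* ---------- Lower-bound type system:  lb K S G q q' e A  means  S;G |-^q_{q'} e : A ---------- *)
Inductive lb (K : costs) (S : signature) : ctx -> Q -> Q -> expr -> atype -> Prop :=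
| lb_unit G q : wfj G q 0 AUnit -> G = nil -> q == Kunit K ->
    lb K S G q 0 EUnit AUnit
| lb_true G q : wfj G q 0 ABool -> G = nil -> q == Kbool K ->
    lb K S G q 0 ETrue ABool
| lb_false G q : wfj G q 0 ABool -> G = nil -> q == Kbool K ->
    lb K S G q 0 EFalse ABool
| lb_int G n q : wfj G q 0 AInt -> G = nil -> q == Kint K ->
    lb K S G q 0 (EInt n) AInt
| lb_nil G p A q : wfj G q 0 (AList p A) -> G = nil -> q == Knil K ->
    lb K S G q 0 ENil (AList p A)
| lb_var G x A q : wfj G q 0 A -> ctx_eq G ((x, A) :: nil) -> q == Kvar K ->
    lb K S G q 0 (EVar x) A
| lb_op G o x1 x2 q : wfj G q 0 (snd (op_type o)) ->
    ctx_eq G ((x1, fst (op_type o)) :: (x2, fst (op_type o)) :: nil) ->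
    q == Kop K ->
    lb K S G q 0 (EOp o x1 x2) (snd (op_type o))
| lb_app G f x A1 A2 r q q' : wfj G q q' A2 -> S f A1 r q' A2 ->
    ctx_eq G ((x, A1) :: nil) -> q == r + Kapp K ->
    lb K S G q q' (EApp f x) A2
| lb_let G G1 G2 x e1 e2 A1 A2 q r q1 q' : wfj G q q' A2 ->
    ctx_eq G (G1 ++ G2) -> r == q - Klet K ->
    lb K S G1 r q1 e1 A1 ->
    lb K S ((x, A1) :: G2) q1 q' e2 A2 ->
    lb K S G q q' (ELet x e1 e2) A2
| lb_if G G0 x et ef A q r q' : wfj G q q' A ->
    ctx_eq G ((x, ABool) :: G0) -> r == q - Kcond K ->
    lb K S G0 r q' et A -> lb K S G0 r q' ef A ->
    lb K S G q q' (EIf x et ef) A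
| lb_pair G x1 x2 A1 A2 q : wfj G q 0 (AProd A1 A2) ->
    ctx_eq G ((x1, A1) :: (x2, A2) :: nil) -> q == Kpair K ->
    lb K S G q 0 (EPair x1 x2) (AProd A1 A2)
| lb_matchP G G0 x x1 x2 e A1 A2 A q r q' : wfj G q q' A ->
    ctx_eq G ((x, AProd A1 A2) :: G0) -> r == q - KmatchP K ->
    lb K S ((x1, A1) :: (x2, A2) :: G0) r q' e A ->
    lb K S G q q' (EMatchP x x1 x2 e) A
| lb_cons G xh xt p A q : wfj G q 0 (AList p A) ->
    ctx_eq G ((xh, A) :: (xt, AList p A) :: nil) -> q == p + Kcons K ->
    lb K S G q 0 (ECons xh xt) (AList p A)
| lb_matchL G G0 x e1 xh xt e2 p A B q r1 r2 q' : wfj G q q' B ->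
    ctx_eq G ((x, AList p A) :: G0) ->
    r1 == q - KmatchN K -> r2 == q + p - KmatchL K ->
    lb K S G0 r1 q' e1 B ->
    lb K S ((xh, A) :: (xt, AList p A) :: G0) r2 q' e2 B ->
    lb K S G q q' (EMatchL x e1 xh xt e2) B
| lb_share G G0 x x1 x2 e A A1 A2 B q q' : wfj G q q' B ->
    ctx_eq G ((x, A) :: G0) -> share A A1 A2 ->
    lb K S ((x1, A1) :: (x2, A2) :: G0) q q' e B ->
    lb K S G q q' (EShare x x1 x2 e) B
| lb_relax G e A p p' q q' : wfj G q q' A ->
    lb K S G p p' e A -> p <= q -> q - p <= q' - p' ->
    lb K S G q q' e A
| lb_weak G G0 x A e B q q' : wfj G q q' B ->
    ctx_eq G ((x, A) :: G0) -> share A A A ->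
    lb K S G0 q q' e B -> lb K S G q q' e B
| lb_subtype G e A B q q' : wfj G q q' B ->
    lb K S G q q' e A -> subty A B -> lb K S G q q' e B
| lb_supertype G G0 x A B e C q q' : wfj G q q' C ->
    ctx_eq G ((x, A) :: G0) -> subty A B ->
    lb K S ((x, B) :: G0) q q' e C -> lb K S G q q' e C.

Definition prog_welltyped_lb (K : costs) (P : program) (S : signature) : Prop :=
  forall f A1 q q' A2, S f A1 q q' A2 ->
    lb K S ((fst (P f), A1) :: nil) q q' (snd (P f)) A2.

(** Induct on the evaluation and, inside, on the typing derivation.  Each
    syntax-directed rule requires exactly the constant potential the semantics
    consumes, and the potential of a value is split exactly between the
    variables naming it (sharing).  Sub- and supertyping only lower the
    left-hand side of the bound, weakening adds variables of potential 0 (as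
    [share A A A] forces), and relaxation is paid for by its side condition.  A call is handled by the outer induction hypothesis, applied to
    the typing of the function body given by well-typedness of the program. *)

From Pilot Require Import Defs.
From Stdlib Require Import QArith ZArith List Permutation Lqa.
Open Scope Q_scope.

Definition lower_bound (E : env) (G : ctx) (q q' : Q) (v : value) (A : atype)
    (p p' : Q) : Prop :=
  q + pot_ctx E G - (q' + pot v A) <= p - p'.

Lemma pot_ctx_cons E x A G :
  pot_ctx E ((x, A) :: G) =
  match E x with Some v => pot v A | None => 0 end + pot_ctx E G.
Proof. reflexivity. Qed.

Lemma pot_ctx_app E G1 G2 : pot_ctx E (G1 ++ G2) == pot_ctx E G1 + pot_ctx E G2.
Proof.
  induction G1 as [|[x A] G1 IH]; simpl app.
  - simpl; lra.
  - rewrite !pot_ctx_cons; lra.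
Qed.

Lemma pot_ctx_perm E G D : Permutation G D -> pot_ctx E G == pot_ctx E D.
Proof.
  induction 1 as [| [x A] | [x A] [y B] |]; rewrite ?pot_ctx_cons; lra.
Qed.

Lemma pot_ctx_ctx_eq E G D : ctx_eq G D -> pot_ctx E G == pot_ctx E D.
Proof. intros [HGD _]; exact (pot_ctx_perm E G D HGD). Qed.

Lemma ctx_eq_cons_pot E G G0 x A w :
  ctx_eq G ((x, A) :: G0) -> E x = Some w -> pot_ctx E G == pot w A + pot_ctx E G0.
Proof. intros HG Hx; rewrite (pot_ctx_ctx_eq E _ _ HG), pot_ctx_cons, Hx; lra. Qed.

Lemma ctx_eq_NoDup G D : ctx_eq G D -> NoDup (map fst D).
Proof.
  intros [HGD HG]; exact (Permutation_NoDup (Permutation_map fst HGD) HG).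
Qed.

Lemma pot_ctx_upd_notin E x v G :
  ~ In x (map fst G) -> pot_ctx (upd E x v) G = pot_ctx E G.
Proof.
  induction G as [|[y A] G IH]; intros Hx; [reflexivity|].
  simpl in Hx; rewrite !pot_ctx_cons, IH by tauto; unfold upd.
  destruct (Nat.eqb_spec y x); [tauto | reflexivity].
Qed.

Lemma pot_ctx_remove_notin E x G :
  ~ In x (map fst G) -> pot_ctx (Defs.remove E x) G = pot_ctx E G.
Proof.
  induction G as [|[y A] G IH]; intros Hx; [reflexivity|].
  simpl in Hx; rewrite !pot_ctx_cons, IH by tauto; unfold Defs.remove.
  destruct (Nat.eqb_spec y x); [tauto | reflexivity].
Qed.

Lemma upd_same E x v : upd E x v x = Some v.
Proof. unfold upd; rewrite Nat.eqb_refl; reflexivity. Qed.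

Lemma pot_ctx_upd2 E x1 x2 v1 v2 A1 A2 G :
  NoDup (x1 :: x2 :: map fst G) ->
  pot_ctx (upd (upd E x1 v1) x2 v2) ((x1, A1) :: (x2, A2) :: G)
  == pot v1 A1 + pot v2 A2 + pot_ctx E G.
Proof.
  intros Hnd; inversion Hnd as [|? ? Hx1 Hnd2]; inversion Hnd2 as [|? ? Hx2 _]; subst.
  assert (x1 <> x2) by (intros <-; apply Hx1; left; reflexivity).
  rewrite !pot_ctx_cons, upd_same, !pot_ctx_upd_notin by (simpl in Hx1; tauto).
  unfold upd at 1; destruct (Nat.eqb_spec x1 x2); [contradiction|].
  rewrite upd_same; lra.
Qed.

Lemma pot_share A A1 A2 v : share A A1 A2 -> pot v A == pot v A1 + pot v A2.
Proof.
  intros HA; revert v; induction HA as [| | | ? ? ? ? ? ? _ IH1 _ IH2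
                                       | p p1 p2 ? ? ? _ IH Hp]; intros [| | |vs|v1 v2];
    simpl; try lra.
  - rewrite IH1, IH2; lra.
  - induction vs as [|w vs IHvs]; [lra|]; rewrite IH, Hp; lra.
Qed.

Lemma pot_subty A B v : subty A B -> pot v A <= pot v B.
Proof.
  intros HAB; revert v; induction HAB as [| | | ? ? ? ? _ IH Hp | ? ? ? ? _ IH1 _ IH2];
    intros [| | |vs|v1 v2]; simpl; try lra.
  - induction vs as [|w vs IHvs]; [lra|]; specialize (IH w); lra.
  - specialize (IH1 v1); specialize (IH2 v2); lra.
Qed.

Lemma pot_op_type o v : pot v (fst (op_type o)) = 0 /\ pot v (snd (op_type o)) = 0.
Proof. destruct o, v; split; reflexivity. Qed.

Lemma lb_NoDup K S G q q' e A : lb K S G q q' e A -> NoDup (map fst G).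
Proof.
  induction 1; try (subst; constructor);
    match goal with HG : ctx_eq _ _ |- _ => apply HG | _ => assumption end.
Qed.

Section Rules.

Variables (K : costs) (E : env) (v : value) (p p' : Q).

Lemma lower_bound_relax G r r' q q' A :
  lower_bound E G r r' v A p p' -> r <= q -> q - r <= q' - r' ->
  lower_bound E G q q' v A p p'.
Proof. unfold lower_bound; lra. Qed.

Lemma lower_bound_weak G G0 x A q q' B :
  ctx_eq G ((x, A) :: G0) -> share A A A ->
  lower_bound E G0 q q' v B p p' -> lower_bound E G q q' v B p p'.
Proof.
  unfold lower_bound; intros HG HA.
  rewrite (pot_ctx_ctx_eq E _ _ HG), pot_ctx_cons.
  destruct (E x) as [w|]; [pose proof (pot_share _ _ _ w HA)|]; lra.
Qed.

Lemma lower_bound_subty G q q' A B :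
  subty A B -> lower_bound E G q q' v A p p' -> lower_bound E G q q' v B p p'.
Proof. unfold lower_bound; intros HAB; pose proof (pot_subty _ _ v HAB); lra. Qed.

Lemma lower_bound_supty G G0 x A B q q' C :
  ctx_eq G ((x, A) :: G0) -> subty A B ->
  lower_bound E ((x, B) :: G0) q q' v C p p' -> lower_bound E G q q' v C p p'.
Proof.
  unfold lower_bound; intros HG HAB.
  rewrite (pot_ctx_ctx_eq E _ _ HG), !pot_ctx_cons.
  destruct (E x) as [w|]; [pose proof (pot_subty _ _ w HAB)|]; lra.
Qed.

Lemma lower_bound_const q w A k :
  p == p' + k -> q == k -> pot w A == 0 -> lower_bound E nil q 0 w A p p'.
Proof. unfold lower_bound; simpl; lra. Qed.

Lemma lower_bound_var G x A q :
  ctx_eq G ((x, A) :: nil) -> E x = Some v ->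
  q == Kvar K -> p == p' + Kvar K -> lower_bound E G q 0 v A p p'.
Proof.
  unfold lower_bound; intros HG Hx Hq Hp.
  rewrite (ctx_eq_cons_pot E _ _ _ _ _ HG Hx); simpl; lra.
Qed.

Lemma lower_bound_op G o x1 x2 w1 w2 q :
  ctx_eq G ((x1, fst (op_type o)) :: (x2, fst (op_type o)) :: nil) ->
  E x1 = Some w1 -> E x2 = Some w2 ->
  q == Kop K -> p == p' + Kop K -> lower_bound E G q 0 v (snd (op_type o)) p p'.
Proof.
  unfold lower_bound; intros HG Hx1 Hx2 Hq Hp.
  rewrite (ctx_eq_cons_pot E _ _ _ _ _ HG Hx1), pot_ctx_cons, Hx2; simpl.
  destruct (pot_op_type o w1) as [-> _], (pot_op_type o w2) as [-> _],
    (pot_op_type o v) as [_ ->]; lra.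
Qed.

Lemma lower_bound_pair G x1 x2 v1 v2 A1 A2 q :
  ctx_eq G ((x1, A1) :: (x2, A2) :: nil) -> E x1 = Some v1 -> E x2 = Some v2 ->
  q == Kpair K -> p == p' + Kpair K ->
  lower_bound E G q 0 (VPair v1 v2) (AProd A1 A2) p p'.
Proof.
  unfold lower_bound; intros HG Hx1 Hx2 Hq Hp.
  rewrite (ctx_eq_cons_pot E _ _ _ _ _ HG Hx1), pot_ctx_cons, Hx2; simpl; lra.
Qed.

Lemma lower_bound_cons G xh xt w ws a A q :
  ctx_eq G ((xh, A) :: (xt, AList a A) :: nil) ->
  E xh = Some w -> E xt = Some (VList ws) ->
  q == a + Kcons K -> p == p' + Kcons K ->
  lower_bound E G q 0 (VList (w :: ws)) (AList a A) p p'.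
Proof.
  unfold lower_bound; intros HG Hxh Hxt Hq Hp.
  rewrite (ctx_eq_cons_pot E _ _ _ _ _ HG Hxh), pot_ctx_cons, Hxt; simpl; lra.
Qed.

Lemma lower_bound_app G y x w A1 A2 r q q' r_ev :
  ctx_eq G ((x, A1) :: nil) -> E x = Some w ->
  q == r + Kapp K -> p == r_ev + Kapp K ->
  lower_bound (upd E y w) ((y, A1) :: nil) r q' v A2 r_ev p' ->
  lower_bound E G q q' v A2 p p'.
Proof.
  unfold lower_bound; intros HG Hx Hq Hp.
  rewrite (ctx_eq_cons_pot E _ _ _ _ _ HG Hx), pot_ctx_cons, upd_same; simpl; lra.
Qed.

Lemma lower_bound_let G G1 G2 x A1 A2 v1 q q1 q' r p1 p2 :
  ctx_eq G (G1 ++ G2) -> NoDup (x :: map fst G2) ->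
  r == q - Klet K -> p1 == p - Klet K ->
  lower_bound E G1 r q1 v1 A1 p1 p2 ->
  lower_bound (upd E x v1) ((x, A1) :: G2) q1 q' v A2 p2 p' ->
  lower_bound E G q q' v A2 p p'.
Proof.
  unfold lower_bound; intros HG Hnd Hr Hp1.
  apply NoDup_cons_iff in Hnd as [Hx _].
  rewrite (pot_ctx_ctx_eq E _ _ HG), pot_ctx_app, pot_ctx_cons, upd_same,
    pot_ctx_upd_notin by exact Hx; lra.
Qed.

Lemma lower_bound_branch G G0 x w Ax q q' r r_ev A k :
  ctx_eq G ((x, Ax) :: G0) -> E x = Some w -> pot w Ax == 0 ->
  r == q - k -> r_ev == p - k ->
  lower_bound E G0 r q' v A r_ev p' -> lower_bound E G q q' v A p p'.
Proof.
  unfold lower_bound; intros HG Hx Hw Hr Hrev.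
  rewrite (ctx_eq_cons_pot E _ _ _ _ _ HG Hx); lra.
Qed.

Lemma lower_bound_matchP G G0 x x1 x2 v1 v2 A1 A2 q q' r r_ev A :
  ctx_eq G ((x, AProd A1 A2) :: G0) -> E x = Some (VPair v1 v2) ->
  NoDup (x1 :: x2 :: map fst G0) ->
  r == q - KmatchP K -> r_ev == p - KmatchP K ->
  lower_bound (upd (upd E x1 v1) x2 v2) ((x1, A1) :: (x2, A2) :: G0) r q' v A r_ev p' ->
  lower_bound E G q q' v A p p'.
Proof.
  unfold lower_bound; intros HG Hx Hnd Hr Hrev.
  rewrite (ctx_eq_cons_pot E _ _ _ _ _ HG Hx), pot_ctx_upd2 by exact Hnd; simpl; lra.
Qed.

Lemma lower_bound_matchL G G0 x xh xt w ws a A q q' r r_ev B :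
  ctx_eq G ((x, AList a A) :: G0) -> E x = Some (VList (w :: ws)) ->
  NoDup (xh :: xt :: map fst G0) ->
  r == q + a - KmatchL K -> r_ev == p - KmatchL K ->
  lower_bound (upd (upd E xh w) xt (VList ws)) ((xh, A) :: (xt, AList a A) :: G0)
    r q' v B r_ev p' ->
  lower_bound E G q q' v B p p'.
Proof.
  unfold lower_bound; intros HG Hx Hnd Hr Hrev.
  rewrite (ctx_eq_cons_pot E _ _ _ _ _ HG Hx), pot_ctx_upd2 by exact Hnd; simpl; lra.
Qed.

Lemma lower_bound_share G G0 x x1 x2 w A A1 A2 q q' B :
  ctx_eq G ((x, A) :: G0) -> E x = Some w -> share A A1 A2 ->
  NoDup (x1 :: x2 :: map fst G0) ->
  lower_bound (upd (upd (Defs.remove E x) x1 w) x2 w) ((x1, A1) :: (x2, A2) :: G0)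
    q q' v B p p' ->
  lower_bound E G q q' v B p p'.
Proof.
  unfold lower_bound; intros HG Hx HA Hnd.
  assert (Hx0 : ~ In x (map fst G0)) by (apply ctx_eq_NoDup in HG; inversion HG; assumption).
  rewrite (ctx_eq_cons_pot E _ _ _ _ _ HG Hx), pot_ctx_upd2, pot_ctx_remove_notin
    by assumption.
  pose proof (pot_share _ _ _ w HA); lra.
Qed.

End Rules.

Lemma lb_eval_lower_bound K P S :
  prog_welltyped_lb K P S ->
  forall E e p p' v, eval K P E e p p' v ->
  forall G q q' A e', lb K S G q q' e' A -> e' = e -> lower_bound E G q q' v A p p'.
Proof.
  intros HP E e p p' v Hev.
  induction Hev; intros G0 q0 q0' A0 e' Hlb; induction Hlb; intros He;
    try discriminate He;
    try (eapply lower_bound_relax; eauto; fail);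
    try (eapply lower_bound_weak; eauto; fail);
    try (eapply lower_bound_subty; eauto; fail);
    try (eapply lower_bound_supty; eauto; fail);
    inversion He; subst; clear He.
  - eapply lower_bound_const; eauto using Qeq_refl.
  - eapply lower_bound_const; eauto using Qeq_refl.
  - eapply lower_bound_const; eauto using Qeq_refl.
  - eapply lower_bound_const; eauto using Qeq_refl.
  - eapply lower_bound_const; eauto using Qeq_refl.
  - eapply lower_bound_var; eauto.
  - eapply lower_bound_op; eauto.
  - eapply lower_bound_pair; eauto.
  - eapply lower_bound_cons; eauto.
  - eapply lower_bound_app; eauto.
  - eapply lower_bound_let; eauto; exact (lb_NoDup _ _ _ _ _ _ _ Hlb2).
  - eapply lower_bound_branch; eauto using Qeq_refl.
  - eapply lower_bound_branch; eauto using Qeq_refl.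
  - eapply lower_bound_matchP; eauto; exact (lb_NoDup _ _ _ _ _ _ _ Hlb).
  - eapply lower_bound_branch; eauto using Qeq_refl.
  - eapply lower_bound_matchL; eauto; exact (lb_NoDup _ _ _ _ _ _ _ Hlb2).
  - eapply lower_bound_share; eauto; exact (lb_NoDup _ _ _ _ _ _ _ Hlb).
Qed.

Theorem theorem6 (K : costs) (P : program) (S : signature)
  (E : env) (G : ctx) (e : expr) (v : value) (A : atype) (q q' : Q) :
  sig_wf S ->
  prog_welltyped_lb K P S ->
  env_models E G ->
  evals K P E e v ->
  lb K S G q q' e A ->
  forall p p' : Q, 0 <= p -> 0 <= p' ->
    eval K P E e p p' v ->
    q + pot_ctx E G - (q' + pot v A) <= p - p'.
Proof.
  intros _ HP _ _ Hlb p p' _ _ Hev.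
  exact (lb_eval_lower_bound K P S HP E e p p' v Hev G q q' A e Hlb eq_refl).
Qed.
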